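(* Let $\Gamma$ and $\Delta$ be LJB-contexts, $A$ a formula and $V$ a set of variables such that $A$ has no free variable in $V$. Let $\Sigma_1\vdash E_1$ be a flattening of the LJB-sequent $\Gamma,[\Delta]_V\vdash A$ and $\Sigma_2\vdash E_2$ a flattening of $[\Gamma]_V,\Delta\vdash A$. Then $\Sigma_1\vdash E_1$ and $\Sigma_2\vdash E_2$ are $\overline{\alpha}$-equivalent.
   Context: Formulas of minimal predicate logic: $A ::= P(t_1,\dots,t_n)\mid A\rightarrow A\mid \forall x\,A$ with first-order terms $t ::= x\mid f(t_1,\dots,t_n)$. LJ$^{+}$-sequent: finite multiset of formulas $\vdash$ formula. LJB-contexts and items: an LJB-context is a finite multiset of items; an item is a formula or $[\Gamma]_V$ with $V$ a finite set of variables (bound by the bracket) and $\Gamma$ an LJB-context; $FV([\Gamma]_V)=FV(\Gamma)\setminus V$. An LJB-sequent $\Gamma\vdash A$ is an LJB-context and a formula. A fresh $\alpha$-variant of an LJB-sequent is an $\alpha$-equivalent LJB-sequent (renaming variables bound by quantifiers or brackets) in which bound variables are pairwise distinct and distinct from free variables; a flattening of an LJB-sequent is an LJ$^{+}$-sequent obtained by erasing all brackets in a fresh $\alpha$-variant of it. Two LJ$^{+}$-sequents $\Gamma\vdash A$ and $\Gamma'\vdash A'$ are $\overline{\alpha}$-equivalent if there exist substitutions $\sigma,\sigma'$ (renamings of variables, so that the two sequents differ only by names of bound and free variables) such that $\sigma(\Gamma\vdash A)$ is $\alpha$-equivalent to $\Gamma'\vdash A'$ and $\sigma'(\Gamma'\vdash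 A')$ is $\alpha$-equivalent to $\Gamma\vdash A$. *)

From Stdlib Require Import List Permutation Arith.
Import ListNotations.

Definition var := nat.

Inductive term : Type :=
| Var : var -> term
| Fn : nat -> list term -> term.

Inductive formula : Type :=
| Pred : nat -> list term -> formula
| Imp : formula -> formula -> formula
| All : var -> formula -> formula.

(* An item is a formula or a bracket [Gamma]_V; an LJB-context is a finite
   multiset of items, represented as a list considered up to permutation.
   The finite set V is represented by a list (considered as a set). *)
Inductive item : Type :=
| IForm : formula -> item
| IBr : list var -> list item -> item.

Definition ljb_context := list item.
Definition ljb_sequent := (list item * formula)%type.
Definition ljp_sequent := (list formula * formula)%type.

Fixpoint fv_term (t : term) : list var :=
  match t with
  | Var x => [x]
  | Fn _ ts => (fix go (ts : list term) : list var :=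
                 match ts with [] => [] | t :: ts => fv_term t ++ go ts end) ts
  end.

Fixpoint fv_form (A : formula) : list var :=
  match A with
  | Pred _ ts => flat_map fv_term ts
  | Imp A B => fv_form A ++ fv_form B
  | All x A => filter (fun y => negb (Nat.eqb y x)) (fv_form A)
  end.

Definition mem_var (x : var) (V : list var) : bool := existsb (Nat.eqb x) V.

Fixpoint fv_item (i : item) : list var :=
  match i with
  | IForm A => fv_form A
  | IBr V G => filter (fun y => negb (mem_var y V))
                 ((fix go (G : list item) : list var :=
                     match G with [] => [] | i :: G => fv_item i ++ go G end) G)
  end.

Definition fv_ctx (G : list item) : list var := flat_map fv_item G.

Definition fv_seq (S : ljb_sequent) : list var := fv_ctx (fst S) ++ fv_form (snd S).

Fixpoint bv_form (A : formula) : list var :=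
  match A with
  | Pred _ _ => []
  | Imp A B => bv_form A ++ bv_form B
  | All x A => x :: bv_form A
  end.

Fixpoint bv_item (i : item) : list var :=
  match i with
  | IForm A => bv_form A
  | IBr V G => V ++ (fix go (G : list item) : list var :=
                       match G with [] => [] | i :: G => bv_item i ++ go G end) G
  end.

Definition bv_ctx (G : list item) : list var := flat_map bv_item G.

Definition bv_seq (S : ljb_sequent) : list var := bv_ctx (fst S) ++ bv_form (snd S).

(* ---------- alpha-equivalence modulo a renaming sigma of free variables ----
   [alpha_* sigma env X Y] holds iff sigma(X) (capture-avoiding application of
   the variable renaming sigma to the free variables of X) is alpha-equivalent
   to Y, where env records the correspondence of the bound variables currently
   in scope (innermost first). *)
Definition env := list (var * var).

Fixpoint var_ok (sigma : var -> var) (e : env) (x y : var) : Prop :=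
  match e with
  | [] => y = sigma x
  | (a, b) :: e' => (a = x /\ b = y) \/ (a <> x /\ b <> y /\ var_ok sigma e' x y)
  end.

Fixpoint alpha_term (sigma : var -> var) (e : env) (t u : term) : Prop :=
  match t, u with
  | Var x, Var y => var_ok sigma e x y
  | Fn f ts, Fn g us =>
      f = g /\
      (fix go (ts us : list term) : Prop :=
         match ts, us with
         | [], [] => True
         | t :: ts, u :: us => alpha_term sigma e t u /\ go ts us
         | _, _ => False
         end) ts us
  | _, _ => False
  end.

Fixpoint alpha_form (sigma : var -> var) (e : env) (A B : formula) : Prop :=
  match A, B with
  | Pred p ts, Pred q us =>
      p = q /\ length ts = length us /\
      Forall2 (alpha_term sigma e) ts us
  | Imp A1 A2, Imp B1 B2 => alpha_form sigma e A1 B1 /\ alpha_form sigma e A2 B2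
  | All x A, All y B => alpha_form sigma ((x, y) :: e) A B
  | _, _ => False
  end.

Definition bijection_between (m : env) (V V' : list var) : Prop :=
  NoDup (map fst m) /\ NoDup (map snd m) /\
  (forall x, In x V <-> In x (map fst m)) /\
  (forall y, In y V' <-> In y (map snd m)).

Inductive alpha_item (sigma : var -> var) : env -> item -> item -> Prop :=
| ai_form : forall e A B,
    alpha_form sigma e A B -> alpha_item sigma e (IForm A) (IForm B)
| ai_br : forall e V V' G G' m,
    bijection_between m V V' ->
    alpha_ctx sigma (m ++ e) G G' ->
    alpha_item sigma e (IBr V G) (IBr V' G')
(* contexts are multisets: compare up to permutation *)
with alpha_ctx (sigma : var -> var) : env -> list item -> list item -> Prop :=
| ac_perm : forall e G G1 G',
    alpha_list sigma e G G1 -> Permutation G1 G' -> alpha_ctx sigma e G G'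
with alpha_list (sigma : var -> var) : env -> list item -> list item -> Prop :=
| al_nil : forall e, alpha_list sigma e [] []
| al_cons : forall e i j G G',
    alpha_item sigma e i j -> alpha_list sigma e G G' ->
    alpha_list sigma e (i :: G) (j :: G').

Definition alpha_seq_sub (sigma : var -> var) (S S' : ljb_sequent) : Prop :=
  alpha_ctx sigma [] (fst S) (fst S') /\ alpha_form sigma [] (snd S) (snd S').

Definition alpha_seq (S S' : ljb_sequent) : Prop := alpha_seq_sub (fun x => x) S S'.

Definition fresh_variant (S S' : ljb_sequent) : Prop :=
  alpha_seq S S' /\
  NoDup (bv_seq S') /\
  (forall x, In x (bv_seq S') -> ~ In x (fv_seq S')).

Fixpoint erase_item (i : item) : list formula :=
  match i with
  | IForm A => [A]
  | IBr _ G => (fix go (G : list item) : list formula :=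
                  match G with [] => [] | i :: G => erase_item i ++ go G end) G
  end.

Definition erase_ctx (G : list item) : list formula := flat_map erase_item G.

Definition is_flattening (S : ljb_sequent) (F : ljp_sequent) : Prop :=
  exists S', fresh_variant S S' /\ F = (erase_ctx (fst S'), snd S').

Definition lift_seq (F : ljp_sequent) : ljb_sequent := (map IForm (fst F), snd F).

Definition abar_equiv (F F' : ljp_sequent) : Prop :=
  exists sigma sigma' : var -> var,
    alpha_seq_sub sigma (lift_seq F) (lift_seq F') /\
    alpha_seq_sub sigma' (lift_seq F') (lift_seq F).

From Stdlib Require Import Bool List Permutation Arith.
Import ListNotations.

(* Both flattenings erase fresh alpha-variants of the same material Gamma and
   Delta: in the first the bracket variables V are renamed by a bijection m in
   the Delta-part, in the second by a bijection m' in the Gamma-part.  The key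
   fact is a triangle property of erasure: if G is alpha-equivalent to G1 under
   the binder correspondence e1 and to G2 under e2, G1 is fresh, and tau sends
   the e1-image of every free variable of G to its e2-image, then the erasures
   of G1 and G2 are alpha-equivalent modulo a renaming that agrees with tau off
   the bound variables of G1.  Here tau is m^-1 on the Delta-side and m' on the
   Gamma-side; it fixes the free variables of A, which avoid V by hypothesis and
   the bracket variables of the first sequent by freshness.  The situation is
   symmetric, which gives the substitution in the other direction. *)

Fixpoint term_ind_nested (P : term -> Prop) (HV : forall x, P (Var x))
  (HF : forall f ts, Forall P ts -> P (Fn f ts)) (t : term) : P t :=
  match t with
  | Var x => HV x
  | Fn f ts => HF f ts ((fix go (ts : list term) : Forall P ts :=
      match ts with
      | [] => Forall_nil _
      | t :: ts => Forall_cons _ (term_ind_nested P HV HF t) (go ts)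
      end) ts)
  end.

Fixpoint item_ind_nested (P : item -> Prop) (HA : forall A, P (IForm A))
  (HB : forall V G, Forall P G -> P (IBr V G)) (i : item) : P i :=
  match i with
  | IForm A => HA A
  | IBr V G => HB V G ((fix go (G : list item) : Forall P G :=
      match G with
      | [] => Forall_nil _
      | i :: G => Forall_cons _ (item_ind_nested P HA HB i) (go G)
      end) G)
  end.

Scheme alpha_item_mut := Induction for alpha_item Sort Prop
with alpha_ctx_mut := Induction for alpha_ctx Sort Prop
with alpha_list_mut := Induction for alpha_list Sort Prop.

Lemma fv_term_Fn f ts : fv_term (Fn f ts) = flat_map fv_term ts.
Proof. simpl; induction ts; simpl; congruence. Qed.

Lemma fv_item_IBr V G :
  fv_item (IBr V G) = filter (fun y => negb (mem_var y V)) (fv_ctx G).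
Proof. simpl; f_equal; induction G; simpl; congruence. Qed.

Lemma bv_item_IBr V G : bv_item (IBr V G) = V ++ bv_ctx G.
Proof. simpl; f_equal; induction G; simpl; congruence. Qed.

Lemma erase_item_IBr V G : erase_item (IBr V G) = erase_ctx G.
Proof. simpl; induction G; simpl; congruence. Qed.

Lemma bv_ctx_app L L' : bv_ctx (L ++ L') = bv_ctx L ++ bv_ctx L'.
Proof. apply flat_map_app. Qed.

Lemma fv_ctx_app L L' : fv_ctx (L ++ L') = fv_ctx L ++ fv_ctx L'.
Proof. apply flat_map_app. Qed.

Lemma erase_ctx_app L L' : erase_ctx (L ++ L') = erase_ctx L ++ erase_ctx L'.
Proof. apply flat_map_app. Qed.

Lemma bv_ctx_one i : bv_ctx [i] = bv_item i.
Proof. apply app_nil_r. Qed.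

Lemma fv_ctx_one i : fv_ctx [i] = fv_item i.
Proof. apply app_nil_r. Qed.

Lemma erase_ctx_one i : erase_ctx [i] = erase_item i.
Proof. apply app_nil_r. Qed.

Lemma mem_var_false x V : mem_var x V = false <-> ~ In x V.
Proof.
  unfold mem_var; rewrite <- not_true_iff_false, existsb_exists.
  split; intros H Hx; apply H.
  - exists x; split; [exact Hx | apply Nat.eqb_refl].
  - destruct Hx as [y [Hy Exy]]; apply Nat.eqb_eq in Exy; subst y; exact Hy.
Qed.

Lemma in_fv_IBr x V G : In x (fv_item (IBr V G)) <-> In x (fv_ctx G) /\ ~ In x V.
Proof.
  rewrite fv_item_IBr, filter_In, <- mem_var_false.
  destruct (mem_var x V); simpl; intuition congruence.
Qed.

Lemma in_fv_All x y A : In x (fv_form (All y A)) <-> In x (fv_form A) /\ x <> y.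
Proof.
  simpl; rewrite filter_In.
  destruct (Nat.eqb_spec x y); simpl; intuition congruence.
Qed.

Lemma alpha_term_Fn s e f ts g us :
  alpha_term s e (Fn f ts) (Fn g us) <-> f = g /\ Forall2 (alpha_term s e) ts us.
Proof.
  simpl; split; intros [-> H]; split; auto; revert us H.
  - induction ts; destruct us; simpl; intros H; try tauto; constructor;
      [tauto | apply IHts; tauto].
  - induction ts; intros us H; inversion H as [|? ? ? ? Hh Ht]; subst; simpl; auto.
    split; [exact Hh | exact (IHts _ Ht)].
Qed.

Lemma NoDup_app_disjoint (l l' : list var) x : NoDup (l ++ l') -> In x l -> ~ In x l'.
Proof.
  induction l as [|a l IH]; simpl; intros N H1 H2; [exact H1|].
  inversion N as [|? ? Na N']; subst.
  destruct H1 as [<-|H1]; [apply Na, in_or_app; auto | exact (IH N' H1 H2)].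
Qed.

Lemma Forall2_triangle {A B C} (R : A -> B -> Prop) (S : A -> C -> Prop)
    (T : B -> C -> Prop) l l1 l2 :
  Forall2 R l l1 -> Forall2 S l l2 ->
  (forall a b c, In a l -> R a b -> S a c -> T b c) -> Forall2 T l1 l2.
Proof.
  intros H1; revert l2; induction H1; intros l2 H2 HT; inversion H2; subst;
    constructor; [eapply HT; simpl; eauto | apply IHForall2; auto].
  intros; eapply HT; simpl; eauto.
Qed.

Lemma Forall2_impl_in {A B} (R T : A -> B -> Prop) l l' :
  Forall2 R l l' -> (forall a b, In a l -> R a b -> T a b) -> Forall2 T l l'.
Proof.
  induction 1; intros HT; constructor;
    [apply HT; simpl; auto | apply IHForall2; intros; apply HT; simpl; auto].
Qed.

Fixpoint lookup (m : env) (x : var) : option var :=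
  match m with
  | [] => None
  | (a, b) :: m' => if Nat.eqb a x then Some b else lookup m' x
  end.

Definition lookup_or (m : env) (x : var) : var :=
  match lookup m x with Some y => y | None => x end.

Definition flip_env (m : env) : env := map (fun p => (snd p, fst p)) m.

Lemma lookup_In m x y : NoDup (map fst m) -> In (x, y) m -> lookup m x = Some y.
Proof.
  induction m as [|[a b] m IH]; simpl; [tauto|]; intros N [E|Hin];
    inversion N as [|? ? Na N']; subst.
  - inversion E; subst; rewrite Nat.eqb_refl; reflexivity.
  - destruct (Nat.eqb_spec a x) as [->|]; auto.
    exfalso; apply Na, (in_map fst _ _ Hin).
Qed.

Lemma lookup_notin m x : ~ In x (map fst m) -> lookup m x = None.
Proof.
  induction m as [|[a b] m IH]; simpl; auto; intros H.
  destruct (Nat.eqb_spec a x); [tauto | auto].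
Qed.

Lemma lookup_flip_In m x y : NoDup (map snd m) -> In (x, y) m -> lookup (flip_env m) y = Some x.
Proof.
  intros N Hin; apply lookup_In.
  - unfold flip_env; rewrite map_map; exact N.
  - exact (in_map (fun p => (snd p, fst p)) _ _ Hin).
Qed.

Lemma lookup_flip_notin m y : ~ In y (map snd m) -> lookup (flip_env m) y = None.
Proof. intros H; apply lookup_notin; unfold flip_env; rewrite map_map; exact H. Qed.

Lemma var_ok_app s m e x y : var_ok s (m ++ e) x y ->
  In (x, y) m \/ (~ In x (map fst m) /\ ~ In y (map snd m) /\ var_ok s e x y).
Proof.
  induction m as [|[a b] m IH]; simpl; auto.
  intros [[-> ->]|[Ha [Hb H]]]; auto.
  destruct (IH H) as [H'|[H1 [H2 H3]]]; auto.
  right; intuition.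
Qed.

Definition renaming_between (tau : var -> var) (e1 e2 : env) (X : list var) : Prop :=
  forall x y1 y2, In x X -> var_ok id e1 x y1 -> var_ok id e2 x y2 -> tau y1 = y2.

Lemma renaming_between_incl tau e1 e2 X Y :
  incl X Y -> renaming_between tau e1 e2 Y -> renaming_between tau e1 e2 X.
Proof. intros HXY H x y1 y2 Hx; apply H, HXY, Hx. Qed.

(* An entry (x, y1, y2) records a binder x of the original together with the
   binders y1 and y2 that replace it in the two copies. *)
Definition copy1_env (t : list (var * var * var)) : env := map (fun '(x, y1, _) => (x, y1)) t.
Definition copy2_env (t : list (var * var * var)) : env := map (fun '(x, _, y2) => (x, y2)) t.
Definition copies_env (t : list (var * var * var)) : env := map (fun '(_, y1, y2) => (y1, y2)) t.

Section Triangle.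

Variables (tau : var -> var) (e1 e2 : env).

Lemma var_ok_triangle x t y1 y2 :
  var_ok id (copy1_env t ++ e1) x y1 -> var_ok id (copy2_env t ++ e2) x y2 ->
  (~ In x (map fst (copy1_env t)) -> var_ok id e1 x y1 -> var_ok id e2 x y2 -> tau y1 = y2) ->
  var_ok tau (copies_env t) y1 y2.
Proof.
  revert y1 y2; induction t as [|[[a b] c] t IH]; simpl; intros y1 y2 H1 H2 H.
  - symmetry; auto.
  - destruct H1 as [[-> ->]|[Ha [Hb H1]]]; destruct H2 as [[E ->]|[Ha' [Hc H2]]];
      auto; try congruence.
    right; repeat split; auto.
    apply IH; auto; intros Hx; apply H; tauto.
Qed.

Lemma alpha_term_triangle u : forall t u1 u2,
  alpha_term id (copy1_env t ++ e1) u u1 -> alpha_term id (copy2_env t ++ e2) u u2 ->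
  (forall x y1 y2, In x (fv_term u) -> ~ In x (map fst (copy1_env t)) ->
     var_ok id e1 x y1 -> var_ok id e2 x y2 -> tau y1 = y2) ->
  alpha_term tau (copies_env t) u1 u2.
Proof.
  induction u as [x|f ts IH] using term_ind_nested; intros t u1 u2 H1 H2 H.
  - destruct u1, u2; simpl in *; try tauto.
    apply (var_ok_triangle x); auto; apply H; left; reflexivity.
  - destruct u1 as [|g us1]; [simpl in H1; tauto|].
    destruct u2 as [|h us2]; [simpl in H2; tauto|].
    apply alpha_term_Fn in H1 as [<- H1]; apply alpha_term_Fn in H2 as [<- H2].
    apply alpha_term_Fn; split; auto.
    apply (Forall2_triangle _ _ _ _ _ _ H1 H2); intros a b c Ha Hb Hc.
    apply (proj1 (Forall_forall _ _) IH a Ha t); auto.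
    intros z ? ? Hz; apply (H z); rewrite fv_term_Fn; apply in_flat_map; eauto.
Qed.

Lemma alpha_form_triangle_under A : forall t A1 A2,
  alpha_form id (copy1_env t ++ e1) A A1 -> alpha_form id (copy2_env t ++ e2) A A2 ->
  (forall x y1 y2, In x (fv_form A) -> ~ In x (map fst (copy1_env t)) ->
     var_ok id e1 x y1 -> var_ok id e2 x y2 -> tau y1 = y2) ->
  alpha_form tau (copies_env t) A1 A2.
Proof.
  induction A as [p ts|A IHA B IHB|x A IH]; intros t A1 A2 H1 H2 H.
  - destruct A1, A2; simpl in *; try tauto.
    destruct H1 as [<- [L1 F1]], H2 as [<- [L2 F2]].
    repeat split; [congruence|].
    apply (Forall2_triangle _ _ _ _ _ _ F1 F2); intros a b c Ha Hb Hc.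
    apply (alpha_term_triangle a t); auto.
    intros z ? ? Hz; apply (H z); apply in_flat_map; eauto.
  - destruct A1, A2; simpl in *; try tauto.
    destruct H1, H2; split; [apply (IHA t) | apply (IHB t)]; auto;
      intros z ? ? Hz; apply (H z); apply in_or_app; auto.
  - destruct A1 as [| |y1 A1], A2 as [| |y2 A2]; simpl in H1, H2; try tauto.
    apply (IH ((x, y1, y2) :: t)); auto.
    intros z z1 z2 Hz Hn; apply H.
    + apply in_fv_All; split; auto; intros ->; apply Hn; left; reflexivity.
    + intros Hin; apply Hn; right; exact Hin.
Qed.

Lemma alpha_form_triangle A A1 A2 :
  alpha_form id e1 A A1 -> alpha_form id e2 A A2 ->
  renaming_between tau e1 e2 (fv_form A) -> alpha_form tau [] A1 A2.
Proof.
  intros H1 H2 H; apply (alpha_form_triangle_under A []); auto.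
  intros x y1 y2 Hx _; apply H, Hx.
Qed.

End Triangle.

Section Agreement.

Variables s s' : var -> var.

Lemma var_ok_agree e x y :
  var_ok s e x y -> (~ In x (map fst e) -> s x = s' x) -> var_ok s' e x y.
Proof.
  induction e as [|[a b] e IH]; simpl; intros H Hs.
  - rewrite <- Hs; auto.
  - destruct H as [H|[Ha [Hb H]]]; auto.
    right; repeat split; auto.
    apply IH; auto; intros Hx; apply Hs; tauto.
Qed.

Lemma alpha_term_agree u : forall e u', alpha_term s e u u' ->
  (forall x, In x (fv_term u) -> ~ In x (map fst e) -> s x = s' x) -> alpha_term s' e u u'.
Proof.
  induction u as [x|f ts IH] using term_ind_nested; intros e u' H Hs.
  - destruct u'; simpl in *; try tauto.
    apply var_ok_agree; auto.
  - destruct u' as [|g us]; [simpl in H; tauto|].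
    apply alpha_term_Fn in H as [<- H]; apply alpha_term_Fn; split; auto.
    apply (Forall2_impl_in _ _ _ _ H); intros a b Ha Hb.
    apply (proj1 (Forall_forall _ _) IH a Ha e); auto.
    intros z Hz; apply Hs; rewrite fv_term_Fn; apply in_flat_map; eauto.
Qed.

Lemma alpha_form_agree A : forall e B, alpha_form s e A B ->
  (forall x, In x (fv_form A) -> ~ In x (map fst e) -> s x = s' x) -> alpha_form s' e A B.
Proof.
  induction A as [p ts|A IHA B IHB|x A IH]; intros e A' H Hs.
  - destruct A'; simpl in *; try tauto.
    destruct H as [<- [L F]]; repeat split; auto.
    apply (Forall2_impl_in _ _ _ _ F); intros a b Ha Hb.
    apply (alpha_term_agree a e); auto.
    intros z Hz; apply Hs; apply in_flat_map; eauto.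
  - destruct A'; simpl in *; try tauto.
    destruct H; split; [apply IHA | apply IHB]; auto;
      intros z Hz; apply Hs; apply in_or_app; auto.
  - destruct A' as [| |y A']; simpl in *; try tauto.
    apply IH; auto; intros z Hz Hn; apply Hs.
    + apply in_fv_All; split; auto; intros ->; apply Hn; left; reflexivity.
    + intros Hin; apply Hn; right; exact Hin.
Qed.

End Agreement.

Definition fv_transported (s : var -> var) (e : env) (X Y : list var) : Prop :=
  forall x, In x X -> exists y, var_ok s e x y /\ In y Y.

Lemma fv_transported_app s e X X' Y Y' :
  fv_transported s e X Y -> fv_transported s e X' Y' ->
  fv_transported s e (X ++ X') (Y ++ Y').
Proof.
  intros H H' x Hx; apply in_app_or in Hx as [Hx|Hx];
    [destruct (H x Hx) as [y [Hy Iy]] | destruct (H' x Hx) as [y [Hy Iy]]];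
    exists y; split; auto; apply in_or_app; auto.
Qed.

Lemma fv_transported_flat_map {T} (f : T -> list var) s e l l' :
  Forall2 (fun a b => fv_transported s e (f a) (f b)) l l' ->
  fv_transported s e (flat_map f l) (flat_map f l').
Proof.
  induction 1; simpl; [intros x []|]; apply fv_transported_app; auto.
Qed.

Lemma alpha_term_fv s u : forall e u', alpha_term s e u u' ->
  fv_transported s e (fv_term u) (fv_term u').
Proof.
  induction u as [z|f ts IH] using term_ind_nested; intros e u' H.
  - destruct u'; simpl in *; try tauto.
    intros x [<-|[]]; exists v; simpl; auto.
  - destruct u' as [|g us]; [simpl in H; tauto|].
    apply alpha_term_Fn in H as [<- H]; rewrite !fv_term_Fn.
    apply fv_transported_flat_map.
    apply (Forall2_impl_in _ _ _ _ H); intros a b Ha Hb.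
    apply (proj1 (Forall_forall _ _) IH a Ha e); auto.
Qed.

Lemma alpha_form_fv s A : forall e B, alpha_form s e A B ->
  fv_transported s e (fv_form A) (fv_form B).
Proof.
  induction A as [p ts|A IHA B IHB|z A IH]; intros e B' H.
  - destruct B'; simpl in *; try tauto.
    destruct H as [<- [_ F]]; apply fv_transported_flat_map.
    apply (Forall2_impl_in _ _ _ _ F); intros a b _ Hb.
    apply alpha_term_fv; exact Hb.
  - destruct B'; simpl in *; try tauto.
    destruct H; apply fv_transported_app; auto.
  - destruct B' as [| |y B']; simpl in H; try tauto.
    intros x Hx; apply in_fv_All in Hx as [Hx Hne].
    destruct (IH _ _ H x Hx) as [w [[[E _]|[_ [Hw W]]] Iw]]; [congruence|].
    exists w; split; auto; apply in_fv_All; auto.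
Qed.

Lemma alpha_ctx_fv s : forall e G G', alpha_ctx s e G G' ->
  fv_transported s e (fv_ctx G) (fv_ctx G').
Proof.
  apply (alpha_ctx_mut s (fun e i j _ => fv_transported s e (fv_item i) (fv_item j))
           (fun e G G' _ => fv_transported s e (fv_ctx G) (fv_ctx G'))
           (fun e G G' _ => fv_transported s e (fv_ctx G) (fv_ctx G'))).
  - intros e A B H; apply alpha_form_fv, H.
  - intros e V V' G G' m [_ [_ [BV BV']]] _ IH x Hx.
    apply in_fv_IBr in Hx as [Hx HxV].
    destruct (IH x Hx) as [y [Y Iy]].
    destruct (var_ok_app _ _ _ _ _ Y) as [Hm|[Hm1 [Hm2 Y']]].
    + exfalso; apply HxV, BV, (in_map fst _ _ Hm).
    + exists y; split; auto; apply in_fv_IBr; rewrite BV'; auto.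
  - intros e G G1 G' _ IH P x Hx.
    destruct (IH x Hx) as [y [Y Iy]]; exists y; split; auto.
    apply (Permutation_in _ (Permutation_flat_map _ P) Iy).
  - intros e x [].
  - intros e i j G G' _ IHi _ IHG; apply fv_transported_app; auto.
Qed.

Lemma alpha_ctx_of_list s e X Y : alpha_list s e X Y -> alpha_ctx s e X Y.
Proof. intros H; apply (ac_perm _ _ _ _ _ H), Permutation_refl. Qed.

Lemma alpha_ctx_perm_r s e X Y Y' :
  alpha_ctx s e X Y -> Permutation Y Y' -> alpha_ctx s e X Y'.
Proof.
  intros H P; inversion H as [? ? Y1 ? A P1]; subst.
  apply (ac_perm _ _ _ _ _ A), (perm_trans P1 P).
Qed.

Lemma alpha_list_perm_l s e X X' : Permutation X X' -> forall Y, alpha_list s e X Y ->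
  exists Y', alpha_list s e X' Y' /\ Permutation Y Y'.
Proof.
  induction 1 as [|x l l' P IHP|x y l|l l' l'' P1 IH1 P2 IH2]; intros Y HY.
  - exists Y; split; auto.
  - inversion HY as [|? ? j ? Y0 Hj HG]; subst.
    destruct (IHP _ HG) as [Y' [A P']].
    exists (j :: Y'); split; constructor; auto.
  - inversion HY as [|e0 i0 j G0 Y0 Hj HG]; subst.
    inversion HG as [|e1 i1 j' G1 Y1 Hj' HG']; subst.
    exists (j' :: j :: Y1); split; [repeat constructor; auto | apply perm_swap].
  - destruct (IH1 _ HY) as [Y1 [A1 Q1]]; destruct (IH2 _ A1) as [Y2 [A2 Q2]].
    exists Y2; split; auto; apply (perm_trans Q1 Q2).
Qed.

Lemma alpha_ctx_perm_l s e X X' Y :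
  alpha_ctx s e X Y -> Permutation X X' -> alpha_ctx s e X' Y.
Proof.
  intros H P; inversion H as [? ? Y1 ? A P1]; subst.
  destruct (alpha_list_perm_l _ _ _ _ P _ A) as [Y' [A' P']].
  apply (ac_perm _ _ _ _ _ A'), (perm_trans (Permutation_sym P') P1).
Qed.

Lemma alpha_list_app s e X Y X' Y' :
  alpha_list s e X Y -> alpha_list s e X' Y' -> alpha_list s e (X ++ X') (Y ++ Y').
Proof. induction 1; simpl; auto; intros; constructor; auto. Qed.

Lemma alpha_ctx_app s e X Y X' Y' :
  alpha_ctx s e X Y -> alpha_ctx s e X' Y' -> alpha_ctx s e (X ++ X') (Y ++ Y').
Proof.
  intros H H'; inversion H; inversion H'; subst.
  apply (ac_perm _ _ _ _ _ (alpha_list_app _ _ _ _ _ _ H0 H5)), Permutation_app; auto.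
Qed.

Lemma alpha_list_app_inv s e X X' Y : alpha_list s e (X ++ X') Y ->
  exists Y1 Y2, Y = Y1 ++ Y2 /\ alpha_list s e X Y1 /\ alpha_list s e X' Y2.
Proof.
  revert Y; induction X as [|i X IH]; simpl; intros Y H.
  - exists [], Y; repeat split; auto; constructor.
  - inversion H as [|? ? j ? Y' Hj HY]; subst.
    destruct (IH _ HY) as [Y1 [Y2 [-> [A B]]]].
    exists (j :: Y1), Y2; repeat split; auto; constructor; auto.
Qed.

Lemma alpha_ctx_forms_agree s s' F Y : alpha_ctx s [] (map IForm F) Y ->
  (forall A x, In A F -> In x (fv_form A) -> s x = s' x) -> alpha_ctx s' [] (map IForm F) Y.
Proof.
  intros H Hs; inversion H as [? ? Y1 ? A P]; subst; clear H.
  apply (ac_perm _ _ _ Y1); [clear P | exact P].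
  revert Y1 A; induction F as [|B F IH]; simpl; intros Y1 A;
    inversion A as [|? ? j ? ? Hj HY]; subst; constructor.
  - inversion Hj; subst; constructor.
    apply (alpha_form_agree s); auto; intros x Hx _; apply (Hs B); simpl; auto.
  - apply IH; auto; intros B' x HB' Hx; apply (Hs B'); simpl; auto.
Qed.

Definition fresh_ctx (L : list item) : Prop :=
  NoDup (bv_ctx L) /\ forall x, In x (bv_ctx L) -> ~ In x (fv_ctx L).

Lemma fresh_ctx_app_l L L' : fresh_ctx (L ++ L') -> fresh_ctx L.
Proof.
  intros [N D]; rewrite bv_ctx_app, fv_ctx_app in *; split.
  - apply (NoDup_app_remove_r _ _ N).
  - intros x H1 H2; apply (D x); apply in_or_app; auto.
Qed.

Lemma fresh_ctx_app_r L L' : fresh_ctx (L ++ L') -> fresh_ctx L'.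
Proof.
  intros [N D]; rewrite bv_ctx_app, fv_ctx_app in *; split.
  - apply (NoDup_app_remove_l _ _ N).
  - intros x H1 H2; apply (D x); apply in_or_app; auto.
Qed.

Lemma fresh_ctx_perm L L' : Permutation L L' -> fresh_ctx L -> fresh_ctx L'.
Proof.
  intros P [N D]; unfold bv_ctx, fv_ctx in *; split.
  - apply (Permutation_NoDup (Permutation_flat_map _ P) N).
  - intros x H1 H2; apply (D x); rewrite P; assumption.
Qed.

Lemma fresh_ctx_bracket V G L : fresh_ctx (IBr V G :: L) -> fresh_ctx G.
Proof.
  intros F; apply (fresh_ctx_app_l [IBr V G] L) in F as [N D].
  rewrite bv_ctx_one, fv_ctx_one, bv_item_IBr in *; split.
  - apply (NoDup_app_remove_l _ _ N).
  - intros x H1 H2; destruct (in_dec Nat.eq_dec x V) as [Hv|Hv].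
    + exact (NoDup_app_disjoint _ _ x N Hv H1).
    + apply (D x); [apply in_or_app; auto | apply in_fv_IBr; auto].
Qed.

Lemma erase_item_fv i A x : In A (erase_item i) -> In x (fv_form A) ->
  In x (fv_item i) \/ In x (bv_item i).
Proof.
  revert A; induction i as [B|V G IH] using item_ind_nested; intros A HA Hx.
  - destruct HA as [<-|[]]; left; exact Hx.
  - rewrite erase_item_IBr in HA; rewrite bv_item_IBr, in_fv_IBr.
    apply in_flat_map in HA as [i [Hi HA]].
    destruct (proj1 (Forall_forall _ _) IH i Hi A HA Hx) as [H|H].
    + destruct (in_dec Nat.eq_dec x V) as [Hv|Hv].
      * right; apply in_or_app; auto.
      * left; split; auto; apply in_flat_map; eauto.
    + right; apply in_or_app; right; apply in_flat_map; eauto.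
Qed.

Lemma erase_ctx_fv L A x : In A (erase_ctx L) -> In x (fv_form A) ->
  In x (fv_ctx L) \/ In x (bv_ctx L).
Proof.
  intros HA Hx; apply in_flat_map in HA as [i [Hi HA]].
  destruct (erase_item_fv i A x HA Hx); [left | right]; apply in_flat_map; eauto.
Qed.

(* Erasure frees the bracket variables of [L1]; [s] extends [tau] to them. *)
Definition erasures_related (tau : var -> var) (L1 L2 : list item) : Prop :=
  exists s, (forall y, ~ In y (bv_ctx L1) -> s y = tau y) /\
    alpha_ctx s [] (map IForm (erase_ctx L1)) (map IForm (erase_ctx L2)).

Lemma erasures_related_perm tau L1 L2 L1' L2' :
  Permutation L1 L1' -> Permutation L2 L2' ->
  erasures_related tau L1 L2 -> erasures_related tau L1' L2'.
Proof.
  intros P1 P2 [s [Hs A]]; exists s; split.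
  - intros y Hy; apply Hs; intros H; apply Hy.
    apply (Permutation_in _ (Permutation_flat_map _ P1) H).
  - apply (alpha_ctx_perm_l _ _ (map IForm (erase_ctx L1))).
    + apply (alpha_ctx_perm_r _ _ _ _ _ A), Permutation_map, Permutation_flat_map, P2.
    + apply Permutation_map, Permutation_flat_map, P1.
Qed.

Lemma erasures_related_form tau A1 A2 :
  alpha_form tau [] A1 A2 -> erasures_related tau [IForm A1] [IForm A2].
Proof.
  intros H; exists tau; split; auto.
  apply alpha_ctx_of_list; repeat constructor; exact H.
Qed.

Lemma erasures_related_nil tau : erasures_related tau [] [].
Proof. exists tau; split; auto; apply alpha_ctx_of_list; constructor. Qed.

(* Freshness of [L1 ++ L2] makes the two local renamings compatible: a bound
   variable of one part is neither bound nor free in the other. *)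
Lemma erasures_related_app tau L1 L2 M1 M2 : fresh_ctx (L1 ++ L2) ->
  erasures_related tau L1 M1 -> erasures_related tau L2 M2 ->
  erasures_related tau (L1 ++ L2) (M1 ++ M2).
Proof.
  intros [N D] [s1 [Hs1 A1]] [s2 [Hs2 A2]]; rewrite bv_ctx_app, fv_ctx_app in *.
  exists (fun y => if in_dec Nat.eq_dec y (bv_ctx L1) then s1 y else s2 y); split.
  - intros y Hy; rewrite bv_ctx_app in Hy; destruct (in_dec Nat.eq_dec y (bv_ctx L1)).
    + exfalso; apply Hy, in_or_app; auto.
    + apply Hs2; intros H; apply Hy, in_or_app; auto.
  - rewrite !erase_ctx_app, !map_app; apply alpha_ctx_app.
    + apply (alpha_ctx_forms_agree _ _ _ _ A1); intros F x HF Hx.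
      destruct (in_dec Nat.eq_dec x (bv_ctx L1)) as [Hi|Hi]; auto.
      destruct (erase_ctx_fv _ _ _ HF Hx) as [Hf|Hf]; [|tauto].
      rewrite Hs1, Hs2; auto.
      intros Hb; apply (D x); apply in_or_app; auto.
    + apply (alpha_ctx_forms_agree _ _ _ _ A2); intros F x HF Hx.
      destruct (in_dec Nat.eq_dec x (bv_ctx L1)) as [Hi|Hi]; auto.
      exfalso; destruct (erase_ctx_fv _ _ _ HF Hx) as [Hf|Hf].
      * apply (D x); apply in_or_app; auto.
      * exact (NoDup_app_disjoint _ _ x N Hi Hf).
Qed.

Lemma erasures_related_bracket_l tau tau' V G M :
  (forall y, ~ In y V -> tau' y = tau y) ->
  erasures_related tau' G M -> erasures_related tau [IBr V G] M.
Proof.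
  intros Htau [s [Hs A]]; exists s; split.
  - intros y Hy; rewrite bv_ctx_one, bv_item_IBr in Hy.
    rewrite Hs, Htau; auto; intros H; apply Hy, in_or_app; auto.
  - rewrite erase_ctx_one, erase_item_IBr; exact A.
Qed.

Lemma erasures_related_bracket_r tau L V G :
  erasures_related tau L G -> erasures_related tau L [IBr V G].
Proof.
  intros [s [Hs A]]; exists s; split; [exact Hs|].
  rewrite erase_ctx_one, erase_item_IBr; exact A.
Qed.

Definition bracket_renaming (m1 m2 : env) (tau : var -> var) (y : var) : var :=
  match lookup (flip_env m1) y with
  | Some x => lookup_or m2 x
  | None => tau y
  end.

Lemma bracket_renaming_outside m1 m2 tau V V1 y :
  bijection_between m1 V V1 -> ~ In y V1 -> bracket_renaming m1 m2 tau y = tau y.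
Proof.
  intros [_ [_ [_ B1']]] Hy; unfold bracket_renaming.
  rewrite lookup_flip_notin; [reflexivity | rewrite <- B1'; exact Hy].
Qed.

Lemma renaming_between_bracket tau e1 e2 m1 m2 V V1 V2 G :
  bijection_between m1 V V1 -> bijection_between m2 V V2 ->
  renaming_between tau e1 e2 (fv_item (IBr V G)) ->
  renaming_between (bracket_renaming m1 m2 tau) (m1 ++ e1) (m2 ++ e2) (fv_ctx G).
Proof.
  intros [_ [N1' [B1 _]]] [N2 [_ [B2 _]]] H x y1 y2 Hx Y1 Y2; unfold bracket_renaming.
  destruct (var_ok_app _ _ _ _ _ Y1) as [M1|[M1a [M1b M1c]]];
    destruct (var_ok_app _ _ _ _ _ Y2) as [M2|[M2a [_ M2c]]].
  - rewrite (lookup_flip_In _ _ _ N1' M1); unfold lookup_or.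
    rewrite (lookup_In _ _ _ N2 M2); reflexivity.
  - exfalso; apply M2a, B2, B1, (in_map fst _ _ M1).
  - exfalso; apply M1a, B1, B2, (in_map fst _ _ M2).
  - rewrite (lookup_flip_notin _ _ M1b); apply (H x); auto.
    apply in_fv_IBr; split; [exact Hx | rewrite B1; exact M1a].
Qed.

Lemma erasures_related_of_alpha_ctx : forall e1 G G1, alpha_ctx id e1 G G1 ->
  forall e2 G2 tau, alpha_ctx id e2 G G2 -> fresh_ctx G1 ->
  renaming_between tau e1 e2 (fv_ctx G) -> erasures_related tau G1 G2.
Proof.
  apply (alpha_ctx_mut id
    (fun e1 i j1 _ => forall e2 j2 tau, alpha_item id e2 i j2 -> fresh_ctx [j1] ->
       renaming_between tau e1 e2 (fv_item i) -> erasures_related tau [j1] [j2])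
    (fun e1 G G1 _ => forall e2 G2 tau, alpha_ctx id e2 G G2 -> fresh_ctx G1 ->
       renaming_between tau e1 e2 (fv_ctx G) -> erasures_related tau G1 G2)
    (fun e1 G G1 _ => forall e2 G2 tau, alpha_list id e2 G G2 -> fresh_ctx G1 ->
       renaming_between tau e1 e2 (fv_ctx G) -> erasures_related tau G1 G2)).
  - intros e1 A A1 H1 e2 j2 tau H2 _ Htau; inversion H2 as [? ? A2 HA2|]; subst.
    apply erasures_related_form, (alpha_form_triangle tau e1 e2 A); auto.
  - intros e1 V V1 G G1 m1 B1 _ IH e2 j2 tau H2 F Htau.
    inversion H2 as [|? ? V2 ? G2 m2 B2 A2]; subst.
    apply erasures_related_bracket_r.
    apply (erasures_related_bracket_l tau (bracket_renaming m1 m2 tau)).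
    { intros y Hy; apply (bracket_renaming_outside _ _ _ _ _ _ B1 Hy). }
    apply (IH (m2 ++ e2) G2 _ A2 (fresh_ctx_bracket _ _ _ F)).
    apply (renaming_between_bracket _ _ _ _ _ _ _ _ _ B1 B2 Htau).
  - intros e1 G L1 G1 _ IH P e2 G2 tau H2 F Htau.
    inversion H2 as [? ? L2 ? A2 P2]; subst.
    apply (erasures_related_perm _ _ _ _ _ P P2).
    apply (IH e2 L2 tau A2 (fresh_ctx_perm _ _ (Permutation_sym P) F) Htau).
  - intros e1 e2 G2 tau H2 _ _; inversion H2; subst; apply erasures_related_nil.
  - intros e1 i j G G1 _ IHi _ IHG e2 L2 tau H2 F Htau.
    inversion H2 as [|? ? j2 ? G2 Hj2 HG2]; subst.
    apply (erasures_related_app _ [j] G1 [j2] G2 F).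
    + apply (IHi e2 j2 tau Hj2 (fresh_ctx_app_l [j] _ F)).
      apply (renaming_between_incl _ _ _ _ (fv_ctx (i :: G))); [|exact Htau].
      intros x Hx; apply in_or_app; left; exact Hx.
    + apply (IHG e2 G2 tau HG2 (fresh_ctx_app_r [j] _ F)).
      apply (renaming_between_incl _ _ _ _ (fv_ctx (i :: G))); [|exact Htau].
      intros x Hx; apply in_or_app; right; exact Hx.
Qed.

Definition rebracket_renaming (m m' : env) : var -> var :=
  bracket_renaming m [] (lookup_or m').

Section Rebracketing.

Variables (V W W' : list var) (m m' : env).
Hypotheses (Hm : bijection_between m V W) (Hm' : bijection_between m' V W').

Lemma rebracket_renaming_inner X : renaming_between (rebracket_renaming m m') m [] X.
Proof.
  destruct Hm as [_ [N' [B _]]], Hm' as [_ [_ [B' _]]].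
  intros x y1 y2 _ Y1 Y2; simpl in Y2; unfold id in Y2; subst y2.
  rewrite <- (app_nil_r m) in Y1; unfold rebracket_renaming, bracket_renaming.
  destruct (var_ok_app _ _ _ _ _ Y1) as [M|[Ma [Mb Y]]].
  - rewrite (lookup_flip_In _ _ _ N' M); reflexivity.
  - simpl in Y; unfold id in Y; subst y1; rewrite (lookup_flip_notin _ _ Mb); unfold lookup_or.
    rewrite lookup_notin; [reflexivity | rewrite <- B', B; exact Ma].
Qed.

Lemma rebracket_renaming_outer X :
  (forall x, In x X -> ~ In x W) -> renaming_between (rebracket_renaming m m') [] m' X.
Proof.
  destruct Hm as [_ [_ [_ BW]]], Hm' as [N [_ _]].
  intros HX x y1 y2 Hx Y1 Y2; simpl in Y1; unfold id in Y1; subst y1.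
  unfold rebracket_renaming, bracket_renaming.
  rewrite lookup_flip_notin by (rewrite <- BW; apply HX, Hx).
  rewrite <- (app_nil_r m') in Y2; unfold lookup_or.
  destruct (var_ok_app _ _ _ _ _ Y2) as [M|[Ma [_ Y]]].
  - rewrite (lookup_In _ _ _ N M); reflexivity.
  - simpl in Y; unfold id in Y; subst y2; rewrite (lookup_notin _ _ Ma); reflexivity.
Qed.

Lemma rebracket_renaming_fixed x : ~ In x V -> ~ In x W -> rebracket_renaming m m' x = x.
Proof.
  destruct Hm as [_ [_ [_ BW]]], Hm' as [_ [_ [B' _]]]; intros HV HW.
  unfold rebracket_renaming, bracket_renaming, lookup_or.
  rewrite lookup_flip_notin by (rewrite <- BW; exact HW).
  rewrite lookup_notin; [reflexivity | rewrite <- B'; exact HV].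
Qed.

End Rebracketing.

Lemma alpha_ctx_bracket_last_inv L V D X :
  alpha_ctx id [] (L ++ [IBr V D]) X ->
  exists Y W m E, alpha_ctx id [] L Y /\ bijection_between m V W /\
    alpha_ctx id m D E /\ Permutation (Y ++ [IBr W E]) X.
Proof.
  intros H; inversion H as [? ? Z ? A P]; subst.
  destruct (alpha_list_app_inv _ _ _ _ _ A) as [Y [Z2 [-> [AY AZ]]]].
  inversion AZ as [|? ? j ? ? Hj Hnil]; subst; inversion Hnil; subst.
  inversion Hj as [|? ? W ? E m Bm AE]; subst; rewrite app_nil_r in AE.
  exists Y, W, m, E; exact (conj (alpha_ctx_of_list _ _ _ _ AY) (conj Bm (conj AE P))).
Qed.

Lemma fresh_variant_fresh_ctx S X B : fresh_variant S (X, B) ->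
  fresh_ctx X /\ forall x, In x (bv_ctx X) -> ~ In x (fv_form B).
Proof.
  intros [_ [N D]]; unfold bv_seq, fv_seq in *; simpl in *; split; [split|].
  - apply (NoDup_app_remove_r _ _ N).
  - intros x H1 H2; apply (D x); apply in_or_app; auto.
  - intros x H1 H2; apply (D x); apply in_or_app; auto.
Qed.

Lemma is_flattening_perm L L' A F :
  Permutation L L' -> is_flattening (L, A) F -> is_flattening (L', A) F.
Proof.
  intros P [S' [[[C HA] Fr] ->]]; exists S'; split; [|reflexivity].
  split; [split; [apply (alpha_ctx_perm_l _ _ _ _ _ C P) | exact HA] | exact Fr].
Qed.

Lemma flattenings_rebracket Gamma Delta A V S1 S2 :
  (forall x, In x V -> ~ In x (fv_form A)) ->
  is_flattening (Gamma ++ [IBr V Delta], A) S1 ->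
  is_flattening (Delta ++ [IBr V Gamma], A) S2 ->
  exists s, alpha_seq_sub s (lift_seq S1) (lift_seq S2).
Proof.
  intros HA [[X1 A1] [Hv1 ->]] [[X2 A2] [Hv2 ->]].
  destruct (fresh_variant_fresh_ctx _ _ _ Hv1) as [Fr1 Disj1].
  destruct Hv1 as [[C1 HA1] _], Hv2 as [[C2 HA2] _]; simpl in *.
  destruct (alpha_ctx_bracket_last_inv _ _ _ _ C1) as (Ga & W & m & Db & CG & Bm & CD & P1).
  destruct (alpha_ctx_bracket_last_inv _ _ _ _ C2) as (Da & W' & m' & Gb & CD' & Bm' & CG' & P2).
  assert (Fr : fresh_ctx (Ga ++ [IBr W Db]))
    by exact (fresh_ctx_perm _ _ (Permutation_sym P1) Fr1).
  assert (HW : forall x, In x W -> In x (bv_ctx X1)).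
  { intros x Hx; apply (Permutation_in _ (Permutation_flat_map _ P1)).
    rewrite bv_ctx_app, bv_ctx_one, bv_item_IBr; apply in_or_app; right; apply in_or_app; auto. }
  set (tau := rebracket_renaming m m').
  destruct (erasures_related_perm tau _ _ _ _ P1 (perm_trans (Permutation_app_comm _ _) P2))
    as [s [Hs Hctx]].
  { apply (erasures_related_app _ _ _ _ _ Fr).
    - apply erasures_related_bracket_r.
      apply (erasures_related_of_alpha_ctx _ _ _ CG _ _ _ CG' (fresh_ctx_app_l _ _ Fr)).
      apply (rebracket_renaming_outer V W W' m m' Bm Bm'); intros x Hx HxW.
      destruct (alpha_ctx_fv _ _ _ _ CG x Hx) as [y [Y Hy]]; simpl in Y; unfold id in Y; subst y.
      apply (proj2 Fr1 x (HW x HxW)).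
      apply (Permutation_in _ (Permutation_flat_map _ P1)).
      rewrite fv_ctx_app; apply in_or_app; left; exact Hy.
    - apply (erasures_related_bracket_l tau tau); [reflexivity|].
      apply (erasures_related_of_alpha_ctx _ _ _ CD _ _ _ CD').
      + apply (fresh_ctx_bracket _ _ _ (fresh_ctx_app_r _ _ Fr)).
      + apply (rebracket_renaming_inner V W W' m m' Bm Bm'). }
  exists s; split; [exact Hctx|].
  apply (alpha_form_agree tau).
  - apply (alpha_form_triangle tau [] [] A); auto.
    intros x y1 y2 Hx Y1 Y2; simpl in Y1, Y2; unfold id in Y1, Y2; subst y1 y2.
    apply (rebracket_renaming_fixed V W W' m m' Bm Bm'); intros HxV.
    { exact (HA x HxV Hx). }
    destruct (alpha_form_fv _ _ _ _ HA1 x Hx) as [y [Y Hy]]; simpl in Y; unfold id in Y; subst y.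
    exact (Disj1 x (HW x HxV) Hy).
  - intros x Hx _; symmetry; apply Hs; intros Hb; exact (Disj1 x Hb Hx).
Qed.

Theorem proposition6 (Gamma Delta : list item) (A : formula) (V : list var)
  (HA : forall x, In x V -> ~ In x (fv_form A))
  (S1 S2 : ljp_sequent) :
  is_flattening (Gamma ++ [IBr V Delta], A) S1 ->
  is_flattening (IBr V Gamma :: Delta, A) S2 ->
  abar_equiv S1 S2.
Proof.
  intros H1 H2.
  assert (H2' : is_flattening (Delta ++ [IBr V Gamma], A) S2)
    by exact (is_flattening_perm _ _ _ _ (Permutation_cons_append _ _) H2).
  destruct (flattenings_rebracket Gamma Delta A V S1 S2 HA H1 H2') as [s Hs].
  destruct (flattenings_rebracket Delta Gamma A V S2 S1 HA H2' H1) as [s' Hs'].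
  exists s, s'; split; assumption.
Qed.
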